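(* Let $V(1),\dots,V(T)\in\mathbb R^p$ and $0=\nu_0<\nu_1<\dots<\nu_M=T$ with $M\ge2$ be such that $V(\nu_m+1)=\dots=V(\nu_{m+1})$ for all $m=0,\dots,M-1$. For $t\in\{1,\dots,T-1\}$ let \[ \widetilde V(t)=\sqrt{\frac{T-t}{Tt}}\sum_{r=1}^tV(r)-\sqrt{\frac{t}{T(T-t)}}\sum_{r=t+1}^TV(r). \] Then the maximum of $\|\widetilde V(t)\|^2$ over $t\in\{1,\dots,T-1\}$ is attained at a change point $\nu_m$, $1\le m\le M-1$; and for each $m=1,\dots,M$, restricted to integers $t\in[\nu_{m-1},\nu_m]\cap\{1,\dots,T-1\}$, the function $t\mapsto\|\widetilde V(t)\|^2$ is either monotone or first decreases and then increases.
   Context: $\|\cdot\|$ is the Euclidean norm. The points $\nu_1,\dots,\nu_{M-1}$ are the change points of the piecewise constant sequence $V$. *)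

From HB Require Import structures.
From mathcomp Require Import all_boot all_order all_algebra.
Set Implicit Arguments. Unset Strict Implicit. Unset Printing Implicit Defensive.
Import Order.TTheory GRing.Theory Num.Theory.
Local Open Scope ring_scope.

Definition sqnorm (R : rcfType) (p : nat) (x : 'rV[R]_p) : R :=
  \sum_(i < p) (x ord0 i) ^+ 2.

Definition Vtilde (R : rcfType) (p T : nat) (V : nat -> 'rV[R]_p) (t : nat)
  : 'rV[R]_p :=
  Num.sqrt ((T - t)%:R / (T%:R * t%:R)) *: (\sum_(1 <= r < t.+1) V r)
  - Num.sqrt (t%:R / (T%:R * (T - t)%:R)) *: (\sum_(t.+1 <= r < T.+1) V r).

Definition nonincr_on (R : rcfType) (a b : nat) (f : nat -> R) : Prop :=
  forall s t, (a <= s)%N -> (s <= t)%N -> (t <= b)%N -> f t <= f s.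
Definition nondecr_on (R : rcfType) (a b : nat) (f : nat -> R) : Prop :=
  forall s t, (a <= s)%N -> (s <= t)%N -> (t <= b)%N -> f s <= f t.

From HB Require Import structures.
From mathcomp Require Import all_boot all_order all_algebra.
From mathcomp Require Import ring lra zify.
Import Order.TTheory GRing.Theory Num.Theory.
Local Open Scope ring_scope.
Set Implicit Arguments. Unset Strict Implicit. Unset Printing Implicit Defensive.

(* With S(k) = V(1) + ... + V(k), one has Vtilde(t) = w(t)^(-1/2) (T S(t) - t S(T)) where
   w(t) = T t (T - t).  Between consecutive change points T S(t) - t S(T) is affine in t,
   so its squared norm q is a convex quadratic while w is concave; hence for l >= 0 the
   set where q <= l w is an interval, i.e. |Vtilde|^2 is quasi-convex on each segment
   (at t = 0 and t = T both q and w vanish).  A quasi-convex function on an integer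
   interval decreases up to a minimiser and increases afterwards, and its maximum over
   the union of the segments is attained at a change point, since |Vtilde|^2 vanishes
   at the outer endpoints 0 and T. *)

Lemma exists_argmin_nat d (X : orderType d) (g : nat -> X) a b : (a <= b)%N ->
  exists2 k, (a <= k <= b)%N & forall i, (a <= i <= b)%N -> (g k <= g i)%O.
Proof.
move=> ab.
have [k ak kmin] := @arg_minP _ _ 'I_b.+1 ord_max (fun i => a <= i)%N (g \o val) ab.
exists (val k); first by rewrite ak -ltnS ltn_ord.
by move=> i /andP[ai ib]; apply: (kmin (Ordinal (ib : (i < b.+1)%N))).
Qed.

Lemma exists_argmax_nat d (X : orderType d) (g : nat -> X) a b : (a <= b)%N ->
  exists2 k, (a <= k <= b)%N & forall i, (a <= i <= b)%N -> (g i <= g k)%O.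
Proof. by move=> ab; have [k kab kmax] := @exists_argmin_nat _ X^d g a b ab; exists k. Qed.

Lemma exists_segment (nu : nat -> nat) n t : (0 < n)%N ->
  (nu 0 <= t)%N -> (t <= nu n)%N -> exists2 m, (m < n)%N & (nu m <= t <= nu m.+1)%N.
Proof.
elim: n => [//|n IH] _ t0 tn.
have [n0 | n_gt0] := posnP n; first by exists 0%N; rewrite // t0 -n0.
have [tn' | nt] := leqP t (nu n).
  by have [m mn mt] := IH n_gt0 t0 tn'; exists m => //; apply: ltnW.
by exists n; rewrite // tn ltnW.
Qed.

Section QuasiConvex.
Variable R : rcfType.
Implicit Types (f : nat -> R) (a b : nat).

Definition quasiconvex_on a b f := forall s t u,
  (a <= s)%N -> (s <= t)%N -> (t <= u)%N -> (u <= b)%N -> f t <= Num.max (f s) (f u).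

Lemma quasiconvex_onW a b a' b' f : (a <= a')%N -> (b' <= b)%N ->
  quasiconvex_on a b f -> quasiconvex_on a' b' f.
Proof.
move=> aa' b'b qf s t u a's st tu ub'.
by apply: qf => //; [apply: leq_trans a's | apply: leq_trans b'b].
Qed.

Lemma quasiconvex_on_valley a b f : (a <= b)%N -> quasiconvex_on a b f ->
  exists2 k, (a <= k <= b)%N & nonincr_on a k f /\ nondecr_on k b f.
Proof.
move=> ab qf; have [k /andP[ak kb] kmin] := exists_argmin_nat f ab.
exists k; first by rewrite ak kb.
split=> s t as_ st tk.
- have := qf s t k as_ st tk kb.
  by rewrite max_l // kmin // as_ (leq_trans (leq_trans st tk) kb).
- have := qf k s t ak as_ st tk.
  by rewrite max_r // kmin // tk (leq_trans ak (leq_trans as_ st)).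
Qed.

Lemma quasiconvex_partition_argmax f (nu : nat -> nat) M : (1 < M)%N ->
  (forall m, (m < M)%N -> quasiconvex_on (nu m) (nu m.+1) f) ->
  (forall t, 0 <= f t) -> f (nu 0) = 0 -> f (nu M) = 0 ->
  exists2 j, (1 <= j <= M - 1)%N & forall t, (nu 0 <= t <= nu M)%N -> f t <= f (nu j).
Proof.
move=> M_gt1 qf f_ge0 fnu0 fnuM.
have M1 : (1 <= M - 1)%N by rewrite subn_gt0.
have [j jM jmax] := exists_argmax_nat (fun i => f (nu i)) M1.
exists j => // t /andP[t0 tM].
have fnu_le i : (i <= M)%N -> f (nu i) <= f (nu j).
  move=> iM; have [-> | i0] := posnP i; first by rewrite fnu0.
  have [iM' | iM' | ->] := ltngtP i M; last by rewrite fnuM.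
  - by apply: jmax; lia.
  - by rewrite leqNgt iM' in iM.
have [m mM /andP[nut tnu]] := exists_segment (ltnW M_gt1) t0 tM.
apply: le_trans (qf m mM _ _ _ (leqnn _) nut tnu (leqnn _)) _.
by rewrite ge_max !fnu_le // ltnW.
Qed.

End QuasiConvex.

Section SquaredNorm.
Variables (R : rcfType) (p : nat).
Implicit Types (x a b : 'rV[R]_p).

Lemma sqnorm_ge0 x : 0 <= sqnorm x.
Proof. by rewrite sumr_ge0 // => i _; apply: sqr_ge0. Qed.

Lemma sqnorm0 : sqnorm (0 : 'rV[R]_p) = 0.
Proof. by rewrite /sqnorm big1 // => i _; rewrite mxE expr0n. Qed.

Lemma sqnormZ (c : R) x : sqnorm (c *: x) = c ^+ 2 * sqnorm x.
Proof. by rewrite /sqnorm mulr_sumr; apply: eq_bigr => i _; rewrite mxE exprMn. Qed.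

Lemma sqnorm_affine_convex a b (s t u : R) : s <= t -> t <= u ->
  (u - s) * sqnorm (a + t *: b)
    <= (u - t) * sqnorm (a + s *: b) + (t - s) * sqnorm (a + u *: b).
Proof.
move=> st tu; rewrite /sqnorm !mulr_sumr -big_split /=; apply: ler_sum => i _.
rewrite !mxE -subr_ge0 (_ : _ - _ = (u - t) * (t - s) * (u - s) * b ord0 i ^+ 2).
  by rewrite mulr_ge0 ?sqr_ge0 // !mulr_ge0 //; lra.
by ring.
Qed.

Lemma sqnorm_affine_le_parabola a b (c s t u l : R) :
  0 <= c -> s < t -> t < u -> 0 <= l ->
  sqnorm (a + s *: b) <= l * (c * s * (c - s)) ->
  sqnorm (a + u *: b) <= l * (c * u * (c - u)) ->
  sqnorm (a + t *: b) <= l * (c * t * (c - t)).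
Proof.
move=> c0 st tu l0 hs hu.
have su : 0 < u - s by rewrite subr_gt0 (lt_trans st tu).
rewrite -(ler_pM2l su).
apply: le_trans (sqnorm_affine_convex a b (ltW st) (ltW tu)) _.
have [ut ts] : 0 <= u - t /\ 0 <= t - s by rewrite !subr_ge0 !ltW.
apply: le_trans (lerD (ler_wpM2l ut hs) (ler_wpM2l ts hu)) _.
rewrite (_ : _ + _ = (u - s) * (l * (c * t * (c - t)))
                     - l * c * (u - s) * (t - s) * (u - t)); last by ring.
by rewrite gerBl !mulr_ge0 //; lra.
Qed.

End SquaredNorm.

Lemma sqrt_sqr_div (R : rcfType) (c w : R) : 0 <= c -> 0 <= w ->
  Num.sqrt (c ^+ 2 / w) = c / Num.sqrt w.
Proof. by move=> c0 w0; rewrite sqrtrM ?sqr_ge0 // sqrtr_sqr ger0_norm // sqrtrV. Qed.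

Section Cusum.
Variables (R : rcfType) (p T : nat) (V : nat -> 'rV[R]_p).

Definition psum k := \sum_(1 <= r < k.+1) V r.

Definition cusum t := T%:R *: psum t - t%:R *: psum T.

Definition cusum_weight t : R := T%:R * t%:R * (T - t)%:R.

Local Notation f t := (sqnorm (Vtilde T V t)).

Lemma cusum_weight_gt0 t : (0 < t < T)%N -> 0 < cusum_weight t.
Proof. by move=> /andP[t0 tT]; rewrite !mulr_gt0 ?ltr0n ?subn_gt0 // (ltn_trans t0). Qed.

Lemma Vtilde_cusum t : (0 < t < T)%N ->
  Vtilde T V t = (Num.sqrt (cusum_weight t))^-1 *: cusum t.
Proof.
move=> /[dup] tT' /andP[t0 tT]; have w0 := cusum_weight_gt0 tT'.
have [T0 t0' Tt0] : [/\ T%:R != 0 :> R, t%:R != 0 :> R & (T - t)%:R != 0 :> R].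
  by rewrite !pnatr_eq0 -!lt0n subn_gt0; split=> //; apply: ltn_trans tT.
have tail : \sum_(t.+1 <= r < T.+1) V r = psum T - psum t.
  by rewrite /psum (@big_cat_nat _ _ _ t.+1 1 T.+1) 1?ltnW //= addrC addrK.
rewrite /Vtilde tail.
rewrite (_ : (T - t)%:R / _ = (T - t)%:R ^+ 2 / cusum_weight t); last first.
  by rewrite /cusum_weight; field; rewrite T0 t0' Tt0.
rewrite (_ : t%:R / _ = t%:R ^+ 2 / cusum_weight t); last first.
  by rewrite /cusum_weight; field; rewrite T0 t0' Tt0.
rewrite !sqrt_sqr_div ?ler0n ?ltW //.
have sw0 : Num.sqrt (cusum_weight t) != 0 by rewrite sqrtr_eq0 -ltNge.
by apply/rowP => i; rewrite !mxE natrB 1?ltnW //; field.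
Qed.

Lemma sqnorm_cusumE t : (t <= T)%N -> sqnorm (cusum t) = f t * cusum_weight t.
Proof.
move=> tT; have [-> | t0] := posnP t.
  rewrite /cusum /psum big_geq // scaler0 scale0r subr0 sqnorm0.
  by rewrite /cusum_weight !(mulr0, mul0r).
move: tT; rewrite leq_eqVlt => /orP[/eqP -> | tT].
  by rewrite /cusum subrr sqnorm0 /cusum_weight subnn !mulr0.
have w0 : 0 < cusum_weight t by apply: cusum_weight_gt0; rewrite t0.
rewrite Vtilde_cusum ?t0 // sqnormZ exprVn sqr_sqrtr ?ltW //.
by rewrite mulrAC mulVf ?mul1r // gt_eqF.
Qed.

Lemma psum_const n n1 t : (forall r, (n < r)%N -> (r <= n1)%N -> V r = V n.+1) ->
  (n <= t <= n1)%N -> psum t = psum n + (t - n)%:R *: V n.+1.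
Proof.
move=> hV /andP[nt tn1]; rewrite /psum (@big_cat_nat _ _ _ n.+1) //=; congr (_ + _).
rewrite (eq_big_nat _ _ (F2 := fun=> V n.+1)) ?sumr_const_nat ?scaler_nat //.
by move=> r /andP[nr rt]; apply: hV; rewrite // -ltnS (leq_trans rt).
Qed.

Lemma cusum_affine n n1 : (forall r, (n < r)%N -> (r <= n1)%N -> V r = V n.+1) ->
  exists a b, forall t, (n <= t <= n1)%N -> cusum t = a + t%:R *: b.
Proof.
move=> hV; exists (T%:R *: (psum n - n%:R *: V n.+1)), (T%:R *: V n.+1 - psum T).
move=> t /[dup] ntn1 /andP[nt _].
by rewrite /cusum (psum_const hV ntn1); apply/rowP => i; rewrite !mxE natrB //; ring.
Qed.

Lemma Vtilde_quasiconvex n n1 : (forall r, (n < r)%N -> (r <= n1)%N -> V r = V n.+1) ->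
  (n1 <= T)%N -> quasiconvex_on n n1 (fun t => f t).
Proof.
move=> hV n1T s t u ns st tu un1.
have [lt_st | | <-] := ltngtP s t; last 2 first.
- by rewrite ltnNge st.
- by rewrite le_max lexx.
have [lt_tu | | ->] := ltngtP t u; last 2 first.
- by rewrite ltnNge tu.
- by rewrite le_max lexx orbT.
have tT : (t < T)%N by apply: leq_trans lt_tu (leq_trans un1 n1T).
have t0 : (0 < t)%N by apply: leq_ltn_trans lt_st.
set l := Num.max (f s) (f u).
have l0 : 0 <= l by rewrite le_max sqnorm_ge0.
have cusum_le x : (x <= T)%N -> f x <= l ->
    sqnorm (cusum x) <= l * (T%:R * x%:R * (T%:R - x%:R)).
  move=> xT fx; rewrite sqnorm_cusumE // -natrB // ler_wpM2r //.
  by rewrite !mulr_ge0 ?ler0n.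
have [a [b ab]] := cusum_affine hV.
have w0 : 0 < cusum_weight t by apply: cusum_weight_gt0; rewrite t0.
rewrite -(ler_pM2r w0) -(sqnorm_cusumE (ltnW tT)) /cusum_weight (natrB _ (ltnW tT)).
rewrite ab; last by rewrite (leq_trans ns st) (leq_trans tu un1).
apply: (sqnorm_affine_le_parabola (s := s%:R) (u := u%:R)); rewrite ?ler0n ?ltr_nat //.
- rewrite -ab; last by rewrite ns (leq_trans st (leq_trans tu un1)).
  by apply: cusum_le; rewrite ?le_max ?lexx // (leq_trans st (ltnW tT)).
- rewrite -ab; last by rewrite un1 (leq_trans ns (leq_trans st tu)).
  by apply: cusum_le; rewrite ?le_max ?lexx ?orbT // (leq_trans un1 n1T).
Qed.

(* At t = 0 and t = T a denominator in Vtilde vanishes, and x / 0 = 0 kills both weights. *)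
Lemma Vtilde0 : Vtilde T V 0 = 0.
Proof. by rewrite /Vtilde !(mulr0, invr0, mul0r, sqrtr0, scale0r) subr0. Qed.

Lemma VtildeT : Vtilde T V T = 0.
Proof. by rewrite /Vtilde subnn !(mulr0, invr0, mul0r, sqrtr0, scale0r) subr0. Qed.

End Cusum.

Theorem proposition1 (R : rcfType) (p T M : nat) (V : nat -> 'rV[R]_p)
  (nu : nat -> nat)
  (hM : (2 <= M)%N)
  (hnu0 : nu 0%N = 0%N)
  (hnuM : nu M = T)
  (hnu_incr : forall m, (m < M)%N -> (nu m < nu m.+1)%N)
  (hconst : forall m t, (m < M)%N -> (nu m < t)%N -> (t <= nu m.+1)%N ->
              V t = V (nu m).+1) :
  let f := fun t => sqnorm (Vtilde T V t) in
  (exists m, [/\ (1 <= m)%N, (m <= M - 1)%N &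
     forall t, (1 <= t)%N -> (t <= T - 1)%N -> f t <= f (nu m)])
  /\
  (forall m, (1 <= m)%N -> (m <= M)%N ->
     let a := maxn (nu m.-1) 1 in
     let b := minn (nu m) (T - 1) in
     [\/ nonincr_on a b f, nondecr_on a b f |
         exists2 k, (a <= k <= b)%N & nonincr_on a k f /\ nondecr_on k b f]).
Proof.
move=> f.
have nu_mono : {in [pred i | (i <= M)%N] &, {homo nu : i j / (i <= j)%N}}.
  apply: homo_leq_in => [// | y x z | i j _ jM k /andP[_ kj] | i _ /= iM].
  - exact: leq_trans.
  - exact: leq_trans (ltnW kj) jM.
  - exact/ltnW/hnu_incr.
have nu_le_T m : (m <= M)%N -> (nu m <= T)%N.
  by move=> mM; rewrite -hnuM; apply: nu_mono; rewrite ?inE.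
have qc m : (m < M)%N -> quasiconvex_on (nu m) (nu m.+1) f.
  move=> mM; exact: Vtilde_quasiconvex (fun r => hconst m r mM) (nu_le_T _ mM).
split.
  have fnu0 : f (nu 0) = 0 by rewrite hnu0 /f Vtilde0 sqnorm0.
  have fnuM : f (nu M) = 0 by rewrite hnuM /f VtildeT sqnorm0.
  have [j /andP[j1 jM] jmax] :=
    quasiconvex_partition_argmax hM qc (fun t => sqnorm_ge0 _) fnu0 fnuM.
  by exists j; split => // t t1 tT; apply: jmax; rewrite hnu0 hnuM; lia.
move=> m m1 mM a b.
have [ab | ba] := leqP a b; last by constructor 1 => s t as_ st tb; lia.
constructor 3; apply: quasiconvex_on_valley ab _.
by apply: quasiconvex_onW (qc m.-1 _); rewrite ?prednK ?leq_maxl ?geq_minl.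
Qed.
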